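(* Let $(X_i,A_i,Y_i)_{1\le i\le n}$ be random with $X_i\in\mathcal X$, $A_i\in\{0,1\}$, $Y_i\in\mathcal Y$, and let $X'_1,\dots,X'_M$ be the distinct values among $X_1,\dots,X_n$. Suppose that, conditionally on $(X_{1:n},A_{1:n})$, the joint distribution of $(Y_1,\dots,Y_n)$ is invariant under every permutation of $[n]$ that maps each block $I_k=\{i: X_i=X'_k\}$ to itself ($k\in[M]$). Let $s:\mathcal X\times\mathcal Y\to\mathbb R$ be a fixed measurable score function and $S_i=s(X_i,Y_i)$. If $N^{(0)}\ge1$, define for every $x\in\mathcal X$ $$\hat C(x)=\Big\{y\in\mathcal Y:\ s(x,y)\le Q_{1-\alpha}\Big(\sum_{k=1}^M\sum_{i\in I_k^1}\frac{1}{N^{(0)}}\frac{N_k^0}{N_k}\delta_{S_i}+\frac{1}{N^{(0)}}\sum_{k=1}^M\frac{(N_k^0)^2}{N_k}\delta_{+\infty}\Big)\Big\},$$ and if $N^{(0)}=0$ let $\hat C(x)=\mathcal Y$. Then $$\mathbb E\Big[\frac{1}{N^{(0)}}\sum_{i\in I_{A=0}}\mathbf 1\{Y_i\in\hat C(X_i)\}\ \Big|\ X_{1:n},A_{1:n}\Big]\ge 1-\alpha.$$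
   Context: $Y_i$ is observed only when $A_i=1$. $I_{A=0}=\{i\in[n]:A_i=0\}$, $N^{(0)}=|I_{A=0}|$. For $k\in[M]$: $I_k=\{i:X_i=X'_k\}$, $I_k^0=\{i\in I_k:A_i=0\}$, $I_k^1=\{i\in I_k:A_i=1\}$, $N_k=|I_k|$, $N_k^0=|I_k^0|$. For a distribution $P$ on $\mathbb R\cup\{+\infty\}$ and $\alpha\in(0,1)$, $Q_{1-\alpha}(P)=\inf\{t\in\mathbb R: \mathbb P_{T\sim P}(T\le t)\ge1-\alpha\}$ (possibly $+\infty$); $\delta_v$ is the point mass at $v$. The coverage proportion $\frac{1}{N^{(0)}}\sum_{i\in I_{A=0}}\mathbf 1\{Y_i\in\hat C(X_i)\}$ is defined to equal $1$ when $N^{(0)}=0$. *)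

From HB Require Import structures.
From mathcomp Require Import all_boot all_order all_algebra all_fingroup.
From mathcomp Require Import all_classical all_reals all_analysis.
Set Implicit Arguments. Unset Strict Implicit. Unset Printing Implicit Defensive.
Import Order.TTheory GRing.Theory Num.Theory.
Local Open Scope classical_set_scope.
Local Open Scope ring_scope.

(* Q_{1-alpha}(P) for a finitely supported distribution
   P = sum_{(w,v) in d} w * delta_v on R \cup {+oo}:
   inf { t in R : P(T <= t) >= 1 - alpha }, in \bar R (inf of empty = +oo). *)
Definition quantile (R : realType) (alpha : R) (d : seq (R * \bar R)) : \bar R :=
  ereal_inf [set (t%:E)%E | t in
     [set t : R | 1 - alpha <= \sum_(p <- d | (p.2 <= t%:E)%E) p.1]].

Section Conformal.
Variables (R : realType) (dX dY : measure_display)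
  (TX : measurableType dX) (TY : measurableType dY) (n : nat).
Variables (X : 'I_n -> TX) (A : 'I_n -> bool) (s : TX -> TY -> R) (alpha : R).

Definition distinctX : seq TX := undup [seq X i | i <- enum 'I_n].
Definition Nblk (x : TX) : nat := #|[set i : 'I_n | X i == x]|.
Definition N0blk (x : TX) : nat := #|[set i : 'I_n | (X i == x) && ~~ A i]|.
Definition N0 : nat := #|[set i : 'I_n | ~~ A i]|.

Definition wdist (y : 'I_n -> TY) : seq (R * \bar R) :=
  [seq ((N0%:R)^-1 * ((N0blk (X i))%:R / (Nblk (X i))%:R), (s (X i) (y i))%:E)
    | i <- enum 'I_n & A i]
  ++ [seq ((N0%:R)^-1 * ((N0blk x)%:R ^+ 2 / (Nblk x)%:R), +oo%E) | x <- distinctX].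

Definition Chat (y : 'I_n -> TY) (x : TX) : set TY :=
  if N0 == 0%N then setT
  else [set v | ((s x v)%:E <= quantile alpha (wdist y))%E].

Definition coverage (y : 'I_n -> TY) : R :=
  if N0 == 0%N then 1
  else (N0%:R)^-1 * \sum_(i < n | ~~ A i) (\1_(Chat y (X i)) (y i) : R).

End Conformal.

Definition block_perm (TX : eqType) (n : nat) (X : 'I_n -> TX) (sg : {perm 'I_n}) :=
  forall i, X (sg i) = X i.

From HB Require Import structures.
From mathcomp Require Import all_boot all_order all_algebra all_fingroup.
From mathcomp Require Import all_classical all_reals all_analysis.
Import Order.TTheory GRing.Theory Num.Theory measurable_realfun.
Local Open Scope classical_set_scope.
Local Open Scope ring_scope.

(* Give unit l of block k the weight w_l = N_k^0 / (N^(0) N_k).  These weights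
   sum to 1, and the atom at +oo of the distribution defining C^ carries exactly
   the weight of the units with A = 0, so its quantile dominates that of the
   w-weighted distribution of all n scores.  Call j low when the w-mass of the
   scores strictly below S_j is < 1 - alpha: a low unit is covered, and the
   w-mass of the low units is always >= 1 - alpha (look at the smallest score
   that is not low).  By block exchangeability P(j low) only depends on the
   block of j, and on block-constant quantities the w-average coincides with the
   uniform average over the units with A = 0, which is the expected coverage. *)

Section box_sigma_algebra.
Context {d : measure_display} (T : measurableType d) (n : nat).

Definition boxes : set (set ('I_n -> T)) :=
  [set \bigcap_(i in setT) (fun z => z i) @^-1` B i
    | B in [set B : 'I_n -> set T | forall i, measurable (B i)]].

Definition boxType := g_sigma_algebraType boxes.

Lemma setI_closed_boxes : setI_closed boxes.
Proof.
move=> _ _ [B mB <-] [B' mB' <-]; exists (fun i => B i `&` B' i).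
  by move=> i; exact: measurableI.
by rewrite -bigcapI; apply: eq_bigcapr.
Qed.

Lemma boxesT : boxes setT.
Proof. by exists (fun=> setT) => //; apply: bigcapT. Qed.

Lemma measurable_vector d' (Om : measurableType d') (Z : 'I_n -> Om -> T) :
  (forall i, measurable_fun setT (Z i)) ->
  measurable_fun setT (fun w => (fun i => Z i w) : boxType).
Proof.
move=> mZ; apply: (@measurability _ _ _ boxType _ _ boxes erefl).
move=> _ [_ [B mB <-] <-].
rewrite setTI preimage_bigcap; apply: fin_bigcap_measurable => // i _.
by rewrite -[X in measurable X]setTI; exact: mZ.
Qed.

Lemma measurable_coord i : measurable_fun setT (fun z : boxType => z i).
Proof.
move=> _ B mB; rewrite setTI; apply: sub_sigma_algebra.
exists (fun j => if j == i then B else setT).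
  by move=> j; case: ifP.
apply/seteqP; split => [z /(_ i I)|z Bz j _]; first by rewrite eqxx.
by case: ifP => // /eqP ->.
Qed.

End box_sigma_algebra.
Arguments measurable_vector {d T n d' Om Z}.

(* Exchangeability on boxes extends to the product sigma-algebra by uniqueness
   of measures agreeing on a pi-system. *)
Lemma measure_vector_perm {d} {T : measurableType d} {dO}
    {Om : measurableType dO} {R : realType} {P : probability Om R} {n}
    {Y : 'I_n -> Om -> T}
    {sg : 'I_n -> 'I_n} :
  (forall i, measurable_fun setT (Y i)) ->
  (forall B : 'I_n -> set T, (forall i, measurable (B i)) ->
     P (\bigcap_(i in setT) (Y (sg i) @^-1` B i))
     = P (\bigcap_(i in setT) (Y i @^-1` B i))) ->
  forall C : set (boxType T n), measurable C ->
  P [set w | C (fun i => Y (sg i) w)] = P [set w | C (fun i => Y i w)].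
Proof.
move=> mY hex C mC.
pose Ysg w : boxType T n := fun i => Y (sg i) w.
pose Yv w : boxType T n := fun i => Y i w.
(* the pushforward measures below take these measurability proofs from the
   context *)
have mYsg : measurable_fun setT Ysg by apply: measurable_vector => i; exact: mY.
have mYv : measurable_fun setT Yv by exact: measurable_vector.
change (pushforward P Ysg C = pushforward P Yv C).
apply: (@measure_unique _ R (boxType T n) (boxes T n) (fun=> setT) erefl
  (setI_closed_boxes T n) (fun=> boxesT T n) (bigcup_const _ (ex_intro _ 0%N I))
  (pushforward P Ysg) (pushforward P Yv)) => //.
- by move=> _ [B mB <-]; exact: hex.
- by move=> _; apply: (le_lt_trans (probability_le1 P measurableT));
    rewrite ltry.
Qed.

Lemma measurable_weighted_rank_lt d (T : measurableType d) (R : realType)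
    (I : finType) (g : I -> T -> R) (w : I -> R) (c : R) (j : I) :
  (forall l, measurable_fun setT (g l)) ->
  measurable [set x | \sum_l w l * ((g l x < g j x)%R)%:R < c].
Proof.
move=> mg.
have mrank : measurable_fun setT (fun x => \sum_l w l * ((g l x < g j x)%R)%:R).
  apply: measurable_sum => l.
  apply: measurable_funM; first exact: measurable_cst.
  have mnatr : measurable_fun setT (fun b : bool => b%:R : R) by [].
  exact: measurableT_comp mnatr (measurable_fun_ltr (mg l) (mg j)).
rewrite -[X in measurable X]setTI.
have -> : [set x | \sum_l w l * ((g l x < g j x)%R)%:R < c] =
    (fun x => \sum_l w l * ((g l x < g j x)%R)%:R) @^-1` `]-oo, c[.
  by apply/seteqP; split => x /=; rewrite in_itv.
exact: mrank.
Qed.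

Lemma ge0_le_integral_nonmeasurable d (T : measurableType d) (R : realType)
    (mu : {measure set T -> \bar R}) (f g : T -> \bar R) :
  (forall x, (0 <= f x)%E) -> (forall x, (f x <= g x)%E) ->
  (\int[mu]_x f x <= \int[mu]_x g x)%E.
Proof.
move=> f0 fg.
have g0 x : (0 <= g x)%E by apply: le_trans (fg x).
rewrite !ge0_integralE //; apply: ereal_sup_le => _ [h hf <-]; exists h => //.
by move=> x; apply: le_trans (hf x) _; rewrite !patch_setT; exact: fg.
Qed.

Lemma probability_integral_ge_cst d (T : measurableType d) (R : realType)
    (P : probability T R) (c : R) (f : T -> \bar R) :
  0 <= c -> (forall x, (c%:E <= f x)%E) -> (c%:E <= \int[P]_x f x)%E.
Proof.
move=> c0 cf.
have <- : (\int[P]_x (cst c%:E) x = c%:E)%E.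
  rewrite integral_cst //.
  exact: eq_trans (congr1 (mule c%:E) (probability_setT P)) (mule1 _).
by apply: ge0_le_integral_nonmeasurable => // x; rewrite lee_fin.
Qed.

Lemma integral_sum_indic d (T : measurableType d) (R : realType)
    (P : probability T R) (I : finType) (c : I -> R) (E : I -> set T) :
  (forall l, 0 <= c l) -> (forall l, measurable (E l)) ->
  (\int[P]_x (\sum_l c l * \1_(E l) x)%:E = (\sum_l c l * fine (P (E l)))%:E)%E.
Proof.
move=> c0 mE; under eq_integral do rewrite -sumEFin.
rewrite ge0_integral_sum //; last 2 first.
- move=> l; apply/measurable_EFinP/measurable_funM; first exact: measurable_cst.
  exact: measurable_indic.
- by move=> l x _; rewrite lee_fin mulr_ge0 // indicE.
rewrite -sumEFin; apply: eq_bigr => l _.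
under eq_integral do rewrite EFinM.
rewrite ge0_integralZl ?lee_fin //; last first.
  by apply/measurable_EFinP; exact: measurable_indic.
rewrite integral_indic // setIT EFinM fineK // ge0_fin_numE //.
by apply: le_lt_trans (probability_le1 _ _) _ => //; rewrite ltry.
Qed.

(* If some j is not small, the minimizer l0 of z among those only has small
   indices strictly below it, so c <= (rank-mass of l0) <= (mass of small). *)
Lemma weighted_rank_mass {R : realFieldType} {I : finType} {w : I -> R} {c : R}
    (z : I -> R) :
  (forall l, 0 <= w l) -> \sum_l w l = 1 -> c <= 1 ->
  c <= \sum_j w j * ((\sum_l w l * ((z l < z j)%R)%:R < c)%R)%:R.
Proof.
move=> w0 w1 c1.
pose small j := \sum_l w l * ((z l < z j)%R)%:R < c.
have [j0 large_j0|] := pickP (fun j => ~~ small j); last first.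
  move=> all_small; rewrite (eq_bigr w) ?w1 // => j _.
  by move: (all_small j) => /negbFE; rewrite /small => ->; rewrite mulr1.
have [l0 large_l0 min_l0] := arg_minP (P := fun j => ~~ small j) z large_j0.
apply: le_trans (_ : \sum_l w l * ((z l < z l0)%R)%:R <= _).
  by rewrite leNgt.
apply: ler_sum => l _; have [zl|] := boolP (z l < z l0); last first.
  by rewrite mulr0 mulr_ge0.
have small_l : small l by apply: contraT => /min_l0; rewrite leNgt zl.
by rewrite /small in small_l; rewrite small_l.
Qed.

Section block_weights.
Context {dX : measure_display} {TX : measurableType dX} {n : nat}.
Variables (X : 'I_n -> TX) (A : 'I_n -> bool).

Lemma natr_card_set (R : numDomainType) (p : pred 'I_n) :
  #|[set i : 'I_n | p i]|%:R = \sum_i (p i)%:R :> R.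
Proof.
rewrite -sum1_card natr_sum big_mkcond /=; apply: eq_bigr => i _.
have -> : (i \in [set j | p j]) = p i by apply/idP/idP; rewrite inE.
by case: (p i).
Qed.

Lemma natr_N0 (R : numDomainType) : (N0 A)%:R = \sum_i (~~ A i)%:R :> R.
Proof. exact: natr_card_set. Qed.

Lemma natr_Nblk (R : numDomainType) (i : 'I_n) :
  (Nblk X (X i))%:R = \sum_l (X l == X i)%:R :> R.
Proof. exact: natr_card_set. Qed.

Lemma Nblk_neq0 (R : numDomainType) (i : 'I_n) : (Nblk X (X i))%:R != 0 :> R.
Proof.
rewrite natr_Nblk (bigD1 i) //= eqxx gt_eqF // ltr_pwDl ?ltr01 //.
by rewrite sumr_ge0 // => l _; rewrite ler0n.
Qed.

Lemma sum_block_frac (R : numFieldType) (p : 'I_n -> R) :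
  (forall i l, X l = X i -> p l = p i) ->
  \sum_l (N0blk X A (X l))%:R / (Nblk X (X l))%:R * p l
  = \sum_i (~~ A i)%:R * p i.
Proof.
move=> p_block.
have -> : \sum_l (N0blk X A (X l))%:R / (Nblk X (X l))%:R * p l
    = \sum_l \sum_i (X l == X i)%:R * ((~~ A i)%:R * p i / (Nblk X (X i))%:R).
  apply: eq_bigr => l _.
  rewrite (natr_card_set _ (fun i => (X i == X l) && ~~ A i)) !mulr_suml.
  apply: eq_bigr => i _; rewrite eq_sym; have [e|] := eqVneq (X l) (X i).
    by rewrite /= mul1r e (p_block i l e) mulrAC.
  by rewrite /= !mul0r.
rewrite exchange_big /=; apply: eq_bigr => i _.
by rewrite -mulr_suml -natr_Nblk mulrC mulfVK // Nblk_neq0.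
Qed.

Definition weight {R : numFieldType} (l : 'I_n) : R :=
  (N0 A)%:R^-1 * ((N0blk X A (X l))%:R / (Nblk X (X l))%:R).

Lemma weight_ge0 (R : numFieldType) l : 0 <= weight l :> R.
Proof. by rewrite mulr_ge0 ?invr_ge0 ?ler0n // divr_ge0 ?ler0n. Qed.

Lemma sum_weight_block (R : numFieldType) (p : 'I_n -> R) :
  (forall i l, X l = X i -> p l = p i) ->
  \sum_l weight l * p l = \sum_i (N0 A)%:R^-1 * (~~ A i)%:R * p i.
Proof.
move=> p_block; under eq_bigr do rewrite -mulrA.
rewrite -mulr_sumr sum_block_frac // mulr_sumr.
by under eq_bigr do rewrite mulrA.
Qed.

Lemma sum_weight (R : numFieldType) : N0 A != 0%N -> \sum_l weight l = 1 :> R.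
Proof.
move=> N0_neq0; under eq_bigr do rewrite -[weight _]mulr1.
rewrite sum_weight_block //; under eq_bigr do rewrite mulr1.
by rewrite -mulr_sumr -natr_N0 mulVf // pnatr_eq0.
Qed.

Lemma le_quantile_wdist (R : realType) {dY : measure_display}
    {TY : measurableType dY} (s : TX -> TY -> R) (alpha : R)
    (y : 'I_n -> TY) (i : 'I_n) :
  \sum_l weight l * ((s (X l) (y l) < s (X i) (y i))%R)%:R < 1 - alpha ->
  ((s (X i) (y i))%:E <= quantile alpha (wdist X A s y))%E.
Proof.
(* atoms at +oo never lie below a real t, and keeping only the atoms with
   A l = true can only lower the mass below t *)
move=> rank_lt; apply/ereal_infP => _ [t ht <-]; rewrite lee_fin leNgt.
apply/negP => t_lt; move: ht; rewrite /= /wdist big_cat /=.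
rewrite [X in (_ <= _ + X) -> _]big_map [X in (_ <= _ + X) -> _]big1 ?addr0;
  last by move=> x; rewrite /= leNgt ltry.
rewrite big_map big_filter_cond big_enum_cond /= => ht.
suff : \sum_(l in 'I_n | A l && ((s (X l) (y l))%:E <= t%:E)%E) weight l
       < 1 - alpha.
  by rewrite ltNge ht.
apply: le_lt_trans rank_lt; rewrite big_mkcond /=; apply: ler_sum => l _.
case: ifP => [/andP[_]|_]; last by rewrite mulr_ge0 ?weight_ge0.
by rewrite lee_fin => /le_lt_trans/(_ t_lt) ->; rewrite mulr1.
Qed.

End block_weights.

Section weighted_conformal.
Context {R : realType} {dO dX dY : measure_display} {Omega : measurableType dO}
  {TX : measurableType dX} {TY : measurableType dY} {n : nat}.
Variables (P : probability Omega R) (X : 'I_n -> TX) (A : 'I_n -> bool)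
  (Y : 'I_n -> Omega -> TY) (s : TX -> TY -> R) (alpha : R).
Hypothesis mY : forall i, measurable_fun setT (Y i).
Hypothesis ms : measurable_fun setT (fun p : TX * TY => s p.1 p.2).

Definition rank_set (j : 'I_n) : set (boxType TY n) :=
  [set z | \sum_l weight X A l * ((s (X l) (z l) < s (X j) (z j))%R)%:R
           < 1 - alpha].

Definition rank_event (j : 'I_n) : set Omega :=
  [set w | rank_set j (fun i => Y i w)].

Lemma measurable_rank_set j : measurable (rank_set j).
Proof.
apply: (@measurable_weighted_rank_lt _ _ _ _
  (fun l (z : boxType TY n) => s (X l) (z l))).
move=> l; have ms_section : measurable_fun setT (s (X l)).
  exact: measurableT_comp ms (pair1_measurable (X l)).
exact: measurableT_comp ms_section (measurable_coord TY n l).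
Qed.

Lemma measurable_rank_event j : measurable (rank_event j).
Proof.
have := measurable_vector mY measurableT _ (measurable_rank_set j).
by rewrite setTI.
Qed.

Lemma rank_event_covered w i : N0 A != 0%N -> rank_event i w ->
  Chat X A s alpha (fun l => Y l w) (X i) (Y i w).
Proof.
by move=> N0_neq0 Ei; rewrite /Chat (negbTE N0_neq0); exact: le_quantile_wdist.
Qed.

Lemma coverage_ge_rank_events w : N0 A != 0%N ->
  \sum_i (N0 A)%:R^-1 * (~~ A i)%:R * \1_(rank_event i) w
  <= coverage X A s alpha (fun l => Y l w).
Proof.
move=> N0_neq0; rewrite /coverage (negbTE N0_neq0) mulr_sumr [leRHS]big_mkcond.
apply: ler_sum => i _; case: (A i); first by rewrite mulr0 !mul0r.
rewrite mulr1 ler_wpM2l ?invr_ge0 // !indicE.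
have [Ei|] := boolP (w \in rank_event i); last by rewrite ler0n.
by rewrite (mem_set (rank_event_covered _ _ N0_neq0 (set_mem Ei))).
Qed.

Lemma rank_events_mass w : N0 A != 0%N -> 0 <= alpha ->
  1 - alpha <= \sum_j weight X A j * \1_(rank_event j) w.
Proof.
move=> N0_neq0 alpha_ge0.
have -> : \sum_j weight X A j * \1_(rank_event j) w = \sum_j weight X A j *
    ((\sum_l weight X A l * ((s (X l) (Y l w) < s (X j) (Y j w))%R)%:R
      < 1 - alpha)%R)%:R :> R.
  apply: eq_bigr => j _; rewrite indicE; congr (_ * _%:R).
  by congr nat_of_bool; apply/idP/idP => [/set_mem|]; last exact: mem_set.
apply: weighted_rank_mass; [exact: weight_ge0 | exact: sum_weight |].
by rewrite lerBlDr lerDl.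
Qed.

Hypothesis Y_exchangeable : forall sg : {perm 'I_n}, block_perm X sg ->
  forall B : 'I_n -> set TY, (forall i, measurable (B i)) ->
    P (\bigcap_(i in setT) (Y (sg i) @^-1` B i))
    = P (\bigcap_(i in setT) (Y i @^-1` B i)).

Lemma rank_event_block {i j : 'I_n} :
  X j = X i -> P (rank_event j) = P (rank_event i).
Proof.
move=> Xji; pose sg := tperm i j.
have sg_block : block_perm X sg.
  by move=> k; rewrite /sg; case: tpermP => [->|->|].
rewrite -(measure_vector_perm mY (Y_exchangeable _ sg_block) _
  (measurable_rank_set i)).
have rank_perm w :
    \sum_l weight X A l * ((s (X l) (Y (sg l) w) < s (X i) (Y (sg i) w))%R)%:R
    = \sum_l weight X A l * ((s (X l) (Y l w) < s (X j) (Y j w))%R)%:R :> R.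
  rewrite [RHS](reindex_inj (@perm_inj _ sg)) /= tpermL -Xji.
  by apply: eq_bigr => l _; rewrite /weight (sg_block l).
by congr (P _); apply/seteqP; split => w;
  rewrite /rank_event /rank_set /= rank_perm.
Qed.

End weighted_conformal.

Theorem theorem1 (R : realType) (dO dX dY : measure_display)
  (Omega : measurableType dO) (TX : measurableType dX) (TY : measurableType dY)
  (P : probability Omega R) (n : nat)
  (X : 'I_n -> TX) (A : 'I_n -> bool) (Y : 'I_n -> Omega -> TY)
  (s : TX -> TY -> R) (alpha : R) :
  0 < alpha < 1 ->
  (forall i, measurable_fun setT (Y i)) ->
  measurable_fun setT (fun p : TX * TY => s p.1 p.2) ->
  (forall sg : {perm 'I_n}, block_perm X sg ->
     forall B : 'I_n -> set TY, (forall i, measurable (B i)) ->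
       P (\bigcap_(i in setT) (Y (sg i) @^-1` B i))
       = P (\bigcap_(i in setT) (Y i @^-1` B i))) ->
  (\int[P]_(w in setT) (coverage X A s alpha (fun i => Y i w))%:E
     >= (1 - alpha)%:E)%E.
Proof.
move=> /andP[alpha_gt0 alpha_lt1] mY ms Y_exch.
have alpha_ge0 := ltW alpha_gt0.
have one_minus_alpha_ge0 : 0 <= 1 - alpha by rewrite subr_ge0 ltW.
have [N0_eq0|N0_neq0] := eqVneq (N0 A) 0%N.
  apply: probability_integral_ge_cst => // w.
  by rewrite /coverage N0_eq0 lee_fin lerBlDr lerDl.
pose E := rank_event X A Y s alpha.
have mE := measurable_rank_event X A Y s alpha mY ms.
apply: (@le_trans _ _
  (\int[P]_w (\sum_j weight X A j * \1_(E j) w : R)%:E)%E).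
  apply: probability_integral_ge_cst => // w.
  by rewrite lee_fin rank_events_mass.
rewrite integral_sum_indic // ?sum_weight_block; last 2 first.
- by move=> i l /(rank_event_block P X A Y s alpha mY ms Y_exch) ->.
- exact: weight_ge0.
have c_ge0 i : 0 <= (N0 A)%:R^-1 * (~~ A i)%:R :> R.
  by rewrite mulr_ge0 ?invr_ge0.
rewrite -integral_sum_indic //; apply: ge0_le_integral_nonmeasurable => w.
  by rewrite lee_fin sumr_ge0 // => i _; rewrite mulr_ge0 // indicE.
by rewrite lee_fin coverage_ge_rank_events.
Qed.
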